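(* Let $n,m,p$ be positive integers and $A\in\mathbb{R}^{n\times n}$, $B\in\mathbb{R}^{n\times m}$, $C\in\mathbb{R}^{p\times n}$, $D\in\mathbb{R}^{p\times m}$ with $DD^T$ positive definite and $BD^T=0$. Assume $(A,B)$ is reachable and $(A,C)$ is observable, and let $N\ge n$ be an integer. Then there exists $\phi_N$ with $0<\phi_N<\tilde\phi_N$ such that for every symmetric $\bar\Phi\in\mathbb{R}^{nN\times nN}$ with $0\le\bar\Phi\le\phi_NI_{nN}$, the matrices $\Omega_{\bar\Phi}$ and $W_{\bar\Phi}$ are positive definite.
   Context: $\le$ is the Loewner order on symmetric matrices; $\sigma_1(M)$ is the largest singular value. Reachability of $(A,B)$ means $\mathrm{rank}[B\ AB\ \cdots\ A^{n-1}B]=n$; observability of $(A,C)$ means $(A^T,C^T)$ is reachable. Block matrices: $\mathcal{R}_N=[B\ AB\ \cdots\ A^{N-1}B]$; $\mathcal{O}_N$ the block column with blocks (top to bottom) $CA^{N-1},\dots,CA,C$; $\mathcal{O}_N^R$ the block column with blocks $A^{N-1},\dots,A,I_n$; $\mathcal{D}_N=I_N\otimes D$; $\mathcal{H}_N$ the $N\times N$ block matrix with $(i,j)$ block $CA^{j-i-1}B$ for $j>i$ and $0$ otherwise; $\mathcal{L}_N$ the $N\times N$ block matrix with $(i,j)$ block $A^{j-i-1}B$ for $j>i$ and $0$ otherwise. Define $\mathcal{J}_N=\mathcal{O}_N^R-\mathcal{L}_N\mathcal{H}_N^T(\mathcal{D}_N\mathcal{D}_N^T+\mathcal{H}_N\mathcal{H}_N^T)^{-1}\mathcal{O}_N$,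 $\Omega_N=\mathcal{O}_N^T(\mathcal{D}_N\mathcal{D}_N^T+\mathcal{H}_N\mathcal{H}_N^T)^{-1}\mathcal{O}_N$, $M_N=\mathcal{L}_N(I_{Nm}+\mathcal{H}_N^T(\mathcal{D}_N\mathcal{D}_N^T)^{-1}\mathcal{H}_N)^{-1}\mathcal{L}_N^T$, and $\tilde\phi_N=1/\sigma_1(M_N)$ (with $1/0=+\infty$). For symmetric $\bar\Phi$ with $0\le\bar\Phi<\tilde\phi_NI_{nN}$: $S_{\bar\Phi}^{-1}:=-(I_{nN}-\bar\Phi M_N)^{-1}\bar\Phi$ (this equals $(-\bar\Phi^{-1}+M_N)^{-1}$ when $\bar\Phi$ is invertible), $\Omega_{\bar\Phi}=\Omega_N+\mathcal{J}_N^TS_{\bar\Phi}^{-1}\mathcal{J}_N$, $\mathcal{Q}_{\bar\Phi}=(I_{Nm}+\mathcal{H}_N^T(\mathcal{D}_N\mathcal{D}_N^T)^{-1}\mathcal{H}_N-\mathcal{L}_N^T\bar\Phi\mathcal{L}_N)^{-1}$, and $W_{\bar\Phi}=\mathcal{R}_N\mathcal{Q}_{\bar\Phi}\mathcal{R}_N^T$. *)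

From HB Require Import structures.
From mathcomp Require Import all_boot all_order all_algebra.
From mathcomp Require Import boolp classical_sets reals constructive_ereal.
Set Implicit Arguments.
Unset Strict Implicit.
Unset Printing Implicit Defensive.
Import Order.TTheory GRing.Theory Num.Theory.
Local Open Scope ring_scope.

Section Defs.
Variable R : realType.

Lemma sum_const_ord (N a : nat) : (\sum_(i < N) a)%N = (N * a)%N.
Proof. by rewrite sum_nat_const card_ord. Qed.

Definition blockmx (N a b : nat) (F : 'I_N -> 'I_N -> 'M[R]_(a, b)) : 'M[R]_(N * a, N * b) :=
  castmx (sum_const_ord N a, sum_const_ord N b)
    (@mxblock R N N (fun _ => a) (fun _ => b) F).

Definition blockcol (N a b : nat) (F : 'I_N -> 'M[R]_(a, b)) : 'M[R]_(N * a, b) :=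
  castmx (sum_const_ord N a, erefl b) (@mxcol R N (fun _ => a) b F).

Definition blockrow (N a b : nat) (F : 'I_N -> 'M[R]_(a, b)) : 'M[R]_(a, N * b) :=
  castmx (erefl a, sum_const_ord N b) (@mxrow R N (fun _ => b) a F).

Definition symmx k (M : 'M[R]_k) := M^T = M.
Definition psd k (M : 'M[R]_k) :=
  symmx M /\ forall x : 'cV[R]_k, 0 <= (x^T *m M *m x) 0 0.
Definition posdef k (M : 'M[R]_k) :=
  symmx M /\ forall x : 'cV[R]_k, x != 0 -> 0 < (x^T *m M *m x) 0 0.
Definition loewner_le k (M1 M2 : 'M[R]_k) := psd (M2 - M1).

Definition sigma1 a b (M : 'M[R]_(a, b)) : R :=
  sup [set s : R | exists e : R, eigenvalue (M^T *m M) e /\ s = Num.sqrt e].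

Variables (n m p : nat) (A : 'M[R]_n) (B : 'M[R]_(n, m)) (C : 'M[R]_(p, n))
  (D : 'M[R]_(p, m)).

Definition Rcal N : 'M[R]_(n, N * m) := blockrow (fun j : 'I_N => A ^+ j *m B).
Definition Ocal N : 'M[R]_(N * p, n) := blockcol (fun i : 'I_N => C *m A ^+ (N - 1 - i)).
Definition OcalR N : 'M[R]_(N * n, n) := blockcol (fun i : 'I_N => A ^+ (N - 1 - i)).
Definition Dcal N : 'M[R]_(N * p, N * m) :=
  blockmx (fun i j : 'I_N => if i == j then D else 0).
Definition Hcal N : 'M[R]_(N * p, N * m) :=
  blockmx (fun i j : 'I_N => if (i < j)%N then C *m A ^+ (j - i - 1) *m B else 0).
Definition Lcal N : 'M[R]_(N * n, N * m) :=
  blockmx (fun i j : 'I_N => if (i < j)%N then A ^+ (j - i - 1) *m B else 0).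

Definition Gcal N : 'M[R]_(N * p) :=
  invmx (Dcal N *m (Dcal N)^T + Hcal N *m (Hcal N)^T).

Definition Jcal N : 'M[R]_(N * n, n) :=
  OcalR N - Lcal N *m (Hcal N)^T *m Gcal N *m Ocal N.
Definition OmegaN N : 'M[R]_n := (Ocal N)^T *m Gcal N *m Ocal N.
Definition Kcal N : 'M[R]_(N * m) :=
  1%:M + (Hcal N)^T *m invmx (Dcal N *m (Dcal N)^T) *m Hcal N.
Definition Mcal N : 'M[R]_(N * n) := Lcal N *m invmx (Kcal N) *m (Lcal N)^T.

Definition phitilde N : \bar R :=
  if sigma1 (Mcal N) == 0 then +oo%E else ((sigma1 (Mcal N))^-1)%:E.

Definition Sinv N (Phi : 'M[R]_(N * n)) : 'M[R]_(N * n) :=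
  - (invmx (1%:M - Phi *m Mcal N) *m Phi).
Definition OmegaPhi N (Phi : 'M[R]_(N * n)) : 'M[R]_n :=
  OmegaN N + (Jcal N)^T *m Sinv Phi *m Jcal N.
Definition Qcal N (Phi : 'M[R]_(N * n)) : 'M[R]_(N * m) :=
  invmx (Kcal N - (Lcal N)^T *m Phi *m Lcal N).
Definition Wcal N (Phi : 'M[R]_(N * n)) : 'M[R]_n :=
  Rcal N *m Qcal Phi *m (Rcal N)^T.

End Defs.

Definition reachable (R : realType) n m (A : 'M[R]_n) (B : 'M[R]_(n, m)) : bool :=
  \rank (Rcal A B n) == n.
Definition observable (R : realType) n p (A : 'M[R]_n) (C : 'M[R]_(p, n)) : bool :=
  reachable A^T C^T.

From HB Require Import structures.
From mathcomp Require Import all_boot all_order all_algebra.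
From mathcomp Require Import boolp classical_sets reals constructive_ereal.
From mathcomp Require Import ring lra zify.
Import Order.TTheory GRing.Theory Num.Theory.
Local Open Scope ring_scope.

Set Implicit Arguments.
Unset Strict Implicit.
Unset Printing Implicit Defensive.

(* At [Phi = 0] both matrices are congruence transforms of positive definite matrices
   by injective maps: [Omega_N = O_N^T (D_N D_N^T + H_N H_N^T)^-1 O_N], where [D_N^T] is
   injective because [D D^T > 0] and [O_N] is injective by observability, and
   [W_0 = R_N K_N^-1 R_N^T] with [K_N >= I], where [R_N^T] is injective by reachability.
   For [0 <= Phi <= phi I] both perturbations are [O(phi)]: [S_Phi^-1 = - T] where
   [T = (I - Phi M_N)^-1 Phi] is symmetric with [x^T T x <= 2 phi |x|^2] as soon as
   [phi ||M_N|| <= 1/8] (with [w = x + M_N T x] one has [T x = Phi w]), and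
   [L_N^T Phi L_N <= phi ||L_N||^2 I]. As [Omega_N] is coercive and [K_N >= I], a small
   enough [phi_N], also taken below [1 / sigma_1(M_N)], keeps both positive definite. *)

Section QuadraticForms.
Variable R : realType.

Definition mxform k (S : 'M[R]_k) (u v : 'cV[R]_k) : R := (u^T *m S *m v) 0 0.
Definition sqnorm k (x : 'cV[R]_k) : R := mxform 1%:M x x.
Definition mxabs k (S : 'M[R]_k) : R := \sum_i \sum_j `|S i j|.

Lemma mxformE k (S : 'M[R]_k) u v :
  mxform S u v = \sum_i \sum_j u i 0 * S i j * v j 0.
Proof.
rewrite /mxform mxE exchange_big; apply: eq_bigr => j _.
by rewrite mxE mulr_suml; apply: eq_bigr => i _; rewrite mxE.
Qed.

Lemma sqnormE k (x : 'cV[R]_k) : sqnorm x = \sum_i x i 0 ^+ 2.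
Proof.
by rewrite /sqnorm /mxform mulmx1 mxE; apply: eq_bigr => i _; rewrite mxE expr2.
Qed.

Lemma sqnorm_ge0 k (x : 'cV[R]_k) : 0 <= sqnorm x.
Proof. by rewrite sqnormE sumr_ge0 // => i _; rewrite sqr_ge0. Qed.

Lemma sqr_le_sqnorm k (x : 'cV[R]_k) i : x i 0 ^+ 2 <= sqnorm x.
Proof. by rewrite sqnormE (bigD1 i) //= lerDl sumr_ge0 // => j _; rewrite sqr_ge0. Qed.

Lemma sqnorm_gt0 k (x : 'cV[R]_k) : (0 < sqnorm x) = (x != 0).
Proof.
rewrite lt_def sqnorm_ge0 andbT; congr negb; apply/eqP/eqP => [x0|->]; last first.
  by rewrite sqnormE big1 // => i _; rewrite mxE expr0n.
apply/matrixP => i j; rewrite (ord1 j) mxE; apply/eqP.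
by rewrite -sqrf_eq0 eq_le sqr_ge0 andbT -x0 sqr_le_sqnorm.
Qed.

Lemma mxformDl k (S : 'M[R]_k) u v w : mxform S (u + v) w = mxform S u w + mxform S v w.
Proof. by rewrite /mxform linearD /= !mulmxDl mxE. Qed.

Lemma mxformDr k (S : 'M[R]_k) u v w : mxform S w (u + v) = mxform S w u + mxform S w v.
Proof. by rewrite /mxform !mulmxDr mxE. Qed.

Lemma mxformZl k (S : 'M[R]_k) a u w : mxform S (a *: u) w = a * mxform S u w.
Proof. by rewrite /mxform linearZ /= -!scalemxAl mxE. Qed.

Lemma mxformZr k (S : 'M[R]_k) a u w : mxform S w (a *: u) = a * mxform S w u.
Proof. by rewrite /mxform -!scalemxAr mxE. Qed.

Lemma mxformNl k (S : 'M[R]_k) u w : mxform S (- u) w = - mxform S u w.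
Proof. by rewrite -scaleN1r mxformZl mulN1r. Qed.

Lemma mxformNr k (S : 'M[R]_k) u w : mxform S w (- u) = - mxform S w u.
Proof. by rewrite -scaleN1r mxformZr mulN1r. Qed.

Lemma mxformD k (S1 S2 : 'M[R]_k) u v : mxform (S1 + S2) u v = mxform S1 u v + mxform S2 u v.
Proof. by rewrite /mxform mulmxDr mulmxDl mxE. Qed.

Lemma mxformN k (S : 'M[R]_k) u v : mxform (- S) u v = - mxform S u v.
Proof. by rewrite /mxform mulmxN mulNmx mxE. Qed.

Lemma mxformB k (S1 S2 : 'M[R]_k) u v : mxform (S1 - S2) u v = mxform S1 u v - mxform S2 u v.
Proof. by rewrite mxformD mxformN. Qed.

Lemma mxform_scalar k a (u v : 'cV[R]_k) : mxform a%:M u v = a * mxform 1%:M u v.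
Proof. by rewrite /mxform mul_mx_scalar mulmx1 -scalemxAl mxE. Qed.

Lemma mxform_mulmxl k (S T : 'M[R]_k) u v : mxform S (T *m u) v = mxform (T^T *m S) u v.
Proof. by rewrite /mxform trmx_mul !mulmxA. Qed.

Lemma mxform_mulmxr k (S T : 'M[R]_k) u v : mxform S u (T *m v) = mxform (S *m T) u v.
Proof. by rewrite /mxform !mulmxA. Qed.

Lemma mxform_congruence a b (S : 'M[R]_a) (X : 'M[R]_(a, b)) u v :
  mxform (X^T *m S *m X) u v = mxform S (X *m u) (X *m v).
Proof. by rewrite /mxform trmx_mul !mulmxA. Qed.

Lemma mxformC k (S : 'M[R]_k) u v : symmx S -> mxform S u v = mxform S v u.
Proof.
rewrite /symmx /mxform => S_sym; rewrite -[v^T *m S *m u]trmxK [(_^T) 0 0]mxE.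
by rewrite !trmx_mul trmxK S_sym mulmxA.
Qed.

Lemma mxform_subZ k (S : 'M[R]_k) u v t : symmx S ->
  mxform S (u - t *: v) (u - t *: v)
  = mxform S u u - 2 * t * mxform S u v + t ^+ 2 * mxform S v v.
Proof.
move=> S_sym; rewrite !(mxformDl, mxformDr, mxformNl, mxformNr, mxformZl, mxformZr).
by rewrite (mxformC v u S_sym); ring.
Qed.

Lemma mxform_CauchySchwarz k (S : 'M[R]_k) u v : psd S ->
  mxform S u v ^+ 2 <= mxform S u u * mxform S v v.
Proof.
case=> S_sym S_ge0.
have quad t : 0 <= mxform S u u - 2 * t * mxform S u v + t ^+ 2 * mxform S v v.
  by rewrite -mxform_subZ // S_ge0.
have a_ge0 := S_ge0 v.
set a := mxform S v v in quad a_ge0 *; set b := mxform S u v in quad *.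
set c := mxform S u u in quad *.
have [a0|a_neq0] := eqVneq a 0.
  (* a degenerate form forces [b = 0]: otherwise [quad] fails at [t = (c + 1) / (2 b)] *)
  have [->|b_neq0] := eqVneq b 0; first by rewrite expr0n a0 mulr0.
  have := quad ((c + 1) / (2 * b)); rewrite a0 mulr0 addr0.
  have -> : 2 * ((c + 1) / (2 * b)) * b = c + 1 by field.
  lra.
have a_gt0 : 0 < a by rewrite lt_def a_neq0.
have := quad (b / a).
have -> : c - 2 * (b / a) * b + (b / a) ^+ 2 * a = (a * c - b ^+ 2) / a by field.
by rewrite pmulr_lge0 ?invr_gt0 // /a /b /c; lra.
Qed.

Lemma mxabs_ge0 k (S : 'M[R]_k) : 0 <= mxabs S.
Proof. by rewrite sumr_ge0 // => i _; rewrite sumr_ge0. Qed.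

Lemma mxform_abs_le k (S : 'M[R]_k) x : `|mxform S x x| <= mxabs S * sqnorm x.
Proof.
rewrite mxformE /mxabs mulr_suml (le_trans (ler_norm_sum _ _ _)) // ler_sum // => i _.
rewrite mulr_suml (le_trans (ler_norm_sum _ _ _)) // ler_sum // => j _.
rewrite mulrAC normrM mulrC ler_wpM2l //.
have := sqr_le_sqnorm x i; have := sqr_le_sqnorm x j.
rewrite -[x i 0 ^+ 2]real_normK ?num_real // -[x j 0 ^+ 2]real_normK ?num_real //.
rewrite normrM; nra.
Qed.

Lemma symmx_congruence a b (S : 'M[R]_a) (X : 'M[R]_(a, b)) :
  symmx S -> symmx (X^T *m S *m X).
Proof. by move=> S_sym; rewrite /symmx !trmx_mul trmxK S_sym mulmxA. Qed.

Lemma psd_congruence a b (S : 'M[R]_a) (X : 'M[R]_(a, b)) : psd S -> psd (X^T *m S *m X).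
Proof.
case=> S_sym S_ge0; split; first exact: symmx_congruence.
by move=> x; rewrite -/(mxform _ x x) mxform_congruence; apply: S_ge0.
Qed.

Lemma posdef_congruence a b (S : 'M[R]_a) (X : 'M[R]_(a, b)) : posdef S ->
  (forall x : 'cV[R]_b, X *m x = 0 -> x = 0) -> posdef (X^T *m S *m X).
Proof.
case=> S_sym S_gt0 X_inj; split; first exact: symmx_congruence.
move=> x x_neq0; rewrite -/(mxform _ x x) mxform_congruence S_gt0 //.
by apply: contra x_neq0 => /eqP/X_inj->.
Qed.

Lemma sqnorm_mulmx a b (X : 'M[R]_(a, b)) x : sqnorm (X *m x) = mxform (X^T *m X) x x.
Proof. by rewrite /sqnorm -mxform_congruence mulmx1. Qed.

Lemma mxform_gram a b (X : 'M[R]_(a, b)) x : mxform (X *m X^T) x x = sqnorm (X^T *m x).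
Proof. by rewrite sqnorm_mulmx trmxK. Qed.

Lemma psd_gram a b (X : 'M[R]_(a, b)) : psd (X *m X^T).
Proof.
split=> [|x]; first by rewrite /symmx trmx_mul trmxK.
by rewrite -/(mxform _ x x) mxform_gram sqnorm_ge0.
Qed.

Lemma posdef_psd k (S : 'M[R]_k) : posdef S -> psd S.
Proof.
case=> S_sym S_gt0; split=> // x; have [->|/S_gt0/ltW//] := eqVneq x 0.
by rewrite trmx0 !mul0mx mxE.
Qed.

Lemma posdef_unitmx k (S : 'M[R]_k) : posdef S -> S \in unitmx.
Proof.
case=> _ S_gt0; rewrite -row_free_unit; apply: inj_row_free => v vS0.
apply/eqP; apply: contraT => v_neq0.
have /S_gt0 : v^T != 0 by rewrite -(inj_eq (@trmx_inj _ _ _)) trmxK trmx0.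
by rewrite trmxK vS0 mul0mx mxE ltxx.
Qed.

Lemma mxform_invmx k (S : 'M[R]_k) x : symmx S -> S \in unitmx ->
  mxform (invmx S) x x = mxform S (invmx S *m x) (invmx S *m x).
Proof.
by move=> S_sym S_unit; rewrite -mxform_congruence trmx_inv S_sym -mulmxA mulmxV ?mulmx1.
Qed.

Lemma psd_invmx k (S : 'M[R]_k) : psd S -> psd (invmx S).
Proof.
case=> S_sym S_ge0; split=> [|x]; first by rewrite /symmx trmx_inv S_sym.
have [S_unit|S_sing] := boolP (S \in unitmx); last by rewrite invmx_out.
by rewrite -/(mxform _ x x) mxform_invmx //; apply: S_ge0.
Qed.

Lemma posdef_invmx k (S : 'M[R]_k) : posdef S -> posdef (invmx S).
Proof.
move=> S_pd; have S_unit := posdef_unitmx S_pd; case: S_pd => S_sym S_gt0.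
split=> [|x x_neq0]; first by rewrite /symmx trmx_inv S_sym.
rewrite -/(mxform _ x x) mxform_invmx // S_gt0 //.
by apply: contra x_neq0 => /eqP Sx0; rewrite -(mulKVmx S_unit x) Sx0 mulmx0.
Qed.

Lemma posdef_coercive k (S : 'M[R]_k) : posdef S ->
  exists2 l, 0 < l & forall x, l * sqnorm x <= mxform S x x.
Proof.
move=> S_pd; have S_unit := posdef_unitmx S_pd.
have Si_psd := posdef_psd (posdef_invmx S_pd).
case: S_pd => S_sym S_gt0; set c := mxabs (invmx S).
have c_ge0 : 0 <= c := mxabs_ge0 _.
exists (1 + c)^-1; first by rewrite invr_gt0; lra.
move=> x; have [->|x_neq0] := eqVneq x 0.
  by rewrite /sqnorm /mxform trmx0 !mul0mx !mxE mulr0.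
have Sx_gt0 := S_gt0 x x_neq0; rewrite -/(mxform S x x) in Sx_gt0.
have x_gt0 : 0 < sqnorm x by rewrite sqnorm_gt0.
(* Cauchy-Schwarz for [S^-1] at [S x] and [x]: [|x|^4 <= (x^T S x) (x^T S^-1 x)]. *)
have := mxform_CauchySchwarz (S *m x) x Si_psd.
have S_symE : S^T = S := S_sym.
rewrite mxform_mulmxl S_symE mulmxV // -/(sqnorm x).
rewrite mxform_mulmxl mxform_mulmxr S_symE mulmxV // mul1mx => CS.
have := le_trans (ler_norm _) (mxform_abs_le (invmx S) x); rewrite -/c => Si_le.
have : sqnorm x ^+ 2 <= mxform S x x * (c * sqnorm x).
  exact: le_trans CS (ler_wpM2l (ltW Sx_gt0) Si_le).
rewrite mulrA expr2 ler_pM2r // => x_le.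
by rewrite mulrC ler_pdivrMr; [nra | lra].
Qed.

Lemma sqnorm_mulmx_le a b (X : 'M[R]_(a, b)) :
  exists2 c, 0 <= c & forall x, sqnorm (X *m x) <= c * sqnorm x.
Proof.
exists (mxabs (X^T *m X)) => [|x]; first exact: mxabs_ge0.
by rewrite sqnorm_mulmx (le_trans (ler_norm _)) ?mxform_abs_le.
Qed.

Lemma loewner_le_scalar k (S : 'M[R]_k) a x : loewner_le S a%:M -> mxform S x x <= a * sqnorm x.
Proof. by case=> _ /(_ x); rewrite -/(mxform _ x x) mxformB mxform_scalar subr_ge0. Qed.

Lemma sigma1_ge0 a b (X : 'M[R]_(a, b)) : 0 <= sigma1 X.
Proof.
rewrite /sigma1; set S := (X in sup X).
have [S_sup|] := pselect (has_sup S); last by move=> ?; rewrite sup_out.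
have [[s Ss] _] := S_sup; apply: le_trans (sup_upper_bound S_sup Ss).
by have [e [_ ->]] := Ss; rewrite sqrtr_ge0.
Qed.

End QuadraticForms.

Definition resolvent (R : realType) k (Phi M : 'M[R]_k) : 'M[R]_k :=
  invmx (1%:M - Phi *m M) *m Phi.

Section Resolvent.
Variables (R : realType) (k : nat) (Phi M : 'M[R]_k) (phi c : R).
Hypotheses (Phi_psd : psd Phi) (Phi_le : forall x, mxform Phi x x <= phi * sqnorm x)
  (M_psd : psd M) (M_le : forall x, sqnorm (M *m x) <= c * sqnorm x)
  (phi_ge0 : 0 <= phi) (small : phi ^+ 2 * c <= 1 / 64).
(* [c] bounds [||M||^2], so [small] says [phi ||M|| <= 1/8]. *)

Let Phi_sym : Phi^T = Phi := Phi_psd.1.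
Let M_sym : M^T = M := M_psd.1.

Lemma mxform_mulmx_le w : mxform Phi (M *m w) w <= sqnorm w / 8.
Proof.
have w_ge0 := sqnorm_ge0 w.
suff : mxform Phi (M *m w) w ^+ 2 <= (sqnorm w / 8) ^+ 2.
  by move=> ?; nra.
apply: le_trans (mxform_CauchySchwarz _ _ Phi_psd) _.
apply: le_trans (ler_pM (Phi_psd.2 _) (Phi_psd.2 _) (Phi_le _) (Phi_le _)) _.
have Mw_le : phi ^+ 2 * sqnorm w * sqnorm (M *m w) <= phi ^+ 2 * sqnorm w * (c * sqnorm w).
  by rewrite ler_wpM2l ?M_le ?mulr_ge0 ?sqr_ge0.
have := ler_wpM2r (sqr_ge0 (sqnorm w)) small; nra.
Qed.

Lemma sub1_mulmx_eq0 (x : 'cV[R]_k) : (1%:M - Phi *m M) *m x = 0 -> x = 0.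
Proof.
rewrite mulmxBl mul1mx => /eqP; rewrite subr_eq0 => /eqP x_fix.
have x_le : sqnorm x <= sqnorm x / 8.
  apply: le_trans (mxform_mulmx_le x).
  by rewrite mxformC // mxform_mulmxr /sqnorm {2}x_fix mxform_mulmxr mul1mx.
apply/eqP; rewrite -[x == 0]negbK -sqnorm_gt0 -leNgt.
have := sqnorm_ge0 x; lra.
Qed.

Lemma resolvent_unitmx : 1%:M - Phi *m M \in unitmx.
Proof.
rewrite -unitmx_tr -row_free_unit; apply: inj_row_free => v vU0.
apply: trmx_inj; rewrite trmx0; apply: sub1_mulmx_eq0.
by rewrite -[_ - _]trmxK -trmx_mul vU0 trmx0.
Qed.

Lemma resolvent_sym : symmx (resolvent Phi M).
Proof.
have U_unit := resolvent_unitmx; set U := 1%:M - Phi *m M in U_unit *.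
have UPhi : U *m Phi = Phi *m U^T.
  by rewrite /U linearB /= trmx1 trmx_mul Phi_sym M_sym mulmxBl mulmxBr mul1mx mulmx1 mulmxA.
rewrite /symmx /resolvent -/U trmx_mul trmx_inv Phi_sym.
rewrite -[LHS](mulKmx U_unit) [U *m _]mulmxA UPhi -[Phi *m U^T *m _]mulmxA.
by rewrite mulmxV ?unitmx_tr // mulmx1.
Qed.

Lemma resolvent_le y : mxform (resolvent Phi M) y y <= 2 * phi * sqnorm y.
Proof.
have U_unit := resolvent_unitmx.
set z := resolvent Phi M *m y; set w := y + M *m z.
have z_eq : z = Phi *m w.
  have : (1%:M - Phi *m M) *m z = Phi *m y by rewrite /z /resolvent !mulmxA mulmxV ?mul1mx.
  by rewrite mulmxBl mul1mx /w mulmxDr => <-; rewrite mulmxA subrK.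
have y_eq : y = w - M *m (Phi *m w) by rewrite -z_eq /w addrK.
have form_eq : mxform (resolvent Phi M) y y = mxform Phi w w - mxform M (Phi *m w) (Phi *m w).
  rewrite /sqnorm -[resolvent _ _]mul1mx -mxform_mulmxr -/z {1}y_eq z_eq.
  by rewrite mxformDl mxformNl mxform_mulmxr mul1mx mxform_mulmxl mulmx1 M_sym.
have w_eq : sqnorm w = mxform 1%:M w y + mxform Phi (M *m w) w.
  rewrite /sqnorm {2}/w z_eq mxformDr; congr (_ + _).
  by rewrite mxform_mulmxr mul1mx mxform_mulmxr mxform_mulmxl M_sym.
have wy_le : mxform 1%:M w y <= sqnorm w / 4 + sqnorm y.
  have := sqnorm_ge0 (w - 2 *: y); rewrite /sqnorm mxform_subZ ?/symmx ?trmx1 //; lra.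
have w_le : sqnorm w <= 2 * sqnorm y.
  have := mxform_mulmx_le w; have := sqnorm_ge0 y; lra.
have := ler_wpM2l phi_ge0 w_le; have := Phi_le w; have := M_psd.2 (Phi *m w).
rewrite -/(mxform M _ _) form_eq; lra.
Qed.

End Resolvent.

Section BlockMatrices.
Variable R : realType.

Lemma trmxX k (A : 'M[R]_k) j : (A ^+ j)^T = A^T ^+ j.
Proof.
elim: j => [|j IHj]; first by rewrite !expr0 trmx1.
by rewrite exprS exprSr -!mulmxE trmx_mul IHj.
Qed.

Lemma castmx_mul a a' b b' c c' (ea : a = a') (eb : b = b') (ec : c = c')
    (X : 'M[R]_(a, b)) (Y : 'M[R]_(b, c)) :
  castmx (ea, eb) X *m castmx (eb, ec) Y = castmx (ea, ec) (X *m Y).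
Proof. by case: a' / ea; case: b' / eb; case: c' / ec; rewrite !castmx_id. Qed.

Lemma castmx_eq0 a a' b b' (e : (a = a') * (b = b')) (X : 'M[R]_(a, b)) :
  (castmx e X == 0) = (X == 0).
Proof. by case: e => ea eb; case: a' / ea; case: b' / eb; rewrite castmx_id. Qed.

Variables (N a b : nat).

Lemma mulmx_blockrow k (Y : 'M[R]_(k, a)) (F : 'I_N -> 'M[R]_(a, b)) :
  Y *m blockrow F = blockrow (fun j => Y *m F j).
Proof. by rewrite /blockrow -[Y in Y *m _](castmx_id (erefl, erefl)) castmx_mul mul_mxrow. Qed.

Lemma blockcol_mulmx k (F : 'I_N -> 'M[R]_(a, b)) (Y : 'M[R]_(b, k)) :
  blockcol F *m Y = blockcol (fun i => F i *m Y).
Proof. by rewrite /blockcol -[Y in _ *m Y](castmx_id (erefl, erefl)) castmx_mul mxcol_mul. Qed.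

Lemma blockrow_eq0 (F : 'I_N -> 'M[R]_(a, b)) : blockrow F = 0 <-> forall j, F j = 0.
Proof.
rewrite /blockrow; split=> [/eqP|F0]; last by rewrite (eq_mxrow F0) mxrow0 castmx_const.
by rewrite castmx_eq0 => /eqP F0 j; rewrite -(mxrowK F j) F0 submxrow0.
Qed.

Lemma blockcol_eq0 (F : 'I_N -> 'M[R]_(a, b)) : blockcol F = 0 <-> forall i, F i = 0.
Proof.
rewrite /blockcol; split=> [/eqP|F0]; last by rewrite (eq_mxcol F0) mxcol0 castmx_const.
by rewrite castmx_eq0 => /eqP F0 i; rewrite -(mxcolK F i) F0 submxcol0.
Qed.

Lemma blockcol_onto (x : 'M[R]_(N * a, b)) : exists F, x = blockcol F.
Proof.
exists (submxcol (castmx (esym (sum_const_ord N a), erefl b) x)).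
by rewrite /blockcol submxcolK castmxKV.
Qed.

Lemma tr_blockmx (F : 'I_N -> 'I_N -> 'M[R]_(a, b)) :
  (blockmx F)^T = blockmx (fun i j => (F j i)^T).
Proof. by rewrite /blockmx trmx_cast tr_mxblock. Qed.

Lemma mul_blockmx_blockcol k (F : 'I_N -> 'I_N -> 'M[R]_(a, b)) (G : 'I_N -> 'M[R]_(b, k)) :
  blockmx F *m blockcol G = blockcol (fun i => \sum_j F i j *m G j).
Proof. by rewrite /blockmx /blockcol castmx_mul mul_mxblock_mxrow. Qed.

End BlockMatrices.

Section Reachability.
Variables (R : realType) (n m : nat) (A : 'M[R]_n) (B : 'M[R]_(n, m)) (N : nat).
Hypotheses (AB_reach : reachable A B) (le_nN : (n <= N)%N).

Lemma reachable_orth (x : 'cV[R]_n) :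
  (forall j : 'I_N, x^T *m (A ^+ j *m B) = 0) -> x = 0.
Proof.
move=> x_orth; apply: trmx_inj; rewrite trmx0; apply/eqP.
rewrite -(mulmx_free_eq0 _ AB_reach) mulmx_blockrow; apply/eqP/blockrow_eq0 => j.
exact: (x_orth (widen_ord le_nN j)).
Qed.

Lemma Rcal_tr_inj : forall x : 'cV[R]_n, (Rcal A B N)^T *m x = 0 -> x = 0.
Proof.
move=> x /(congr1 trmx); rewrite trmx_mul trmxK trmx0 mulmx_blockrow => /blockrow_eq0.
exact: reachable_orth.
Qed.

End Reachability.

Lemma Ocal_inj (R : realType) n p (A : 'M[R]_n) (C : 'M[R]_(p, n)) N :
  observable A C -> (n <= N)%N -> forall x : 'cV[R]_n, Ocal A C N *m x = 0 -> x = 0.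
Proof.
move=> AC_obs le_nN x; rewrite blockcol_mulmx => /blockcol_eq0 Cx0.
apply: (reachable_orth AC_obs le_nN) => j.
have -> : j = (N - 1 - rev_ord j)%N :> nat by have := ltn_ord j; rewrite /=; lia.
by rewrite -trmxX -!trmx_mul Cx0 trmx0.
Qed.

Lemma Dcal_tr_inj (R : realType) m p (D : 'M[R]_(p, m)) N (x : 'cV[R]_(N * p)) :
  posdef (D *m D^T) -> (Dcal D N)^T *m x = 0 -> x = 0.
Proof.
case=> _ DDt_gt0; have [G ->] := blockcol_onto x.
rewrite tr_blockmx mul_blockmx_blockcol => /blockcol_eq0 DG0.
apply/blockcol_eq0 => i; apply/eqP; apply: contraT => Gi_neq0.
have DtGi0 : D^T *m G i = 0.
  rewrite -(DG0 i) (bigD1 i) //= eqxx big1 ?addr0 // => j /negbTE ->.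
  by rewrite trmx0 mul0mx.
by have := DDt_gt0 _ Gi_neq0; rewrite -!mulmxA DtGi0 !mulmx0 mxE ltxx.
Qed.

Lemma mulVD1r_lt1 (R : realFieldType) (c : R) : 0 <= c -> (1 + c)^-1 * c < 1.
Proof. by move=> c_ge0; rewrite mulrC ltr_pdivrMr ?mul1r; lra. Qed.

Section System.
Variables (R : realType) (n m p : nat) (A : 'M[R]_n) (B : 'M[R]_(n, m))
  (C : 'M[R]_(p, n)) (D : 'M[R]_(p, m)) (N : nat).
Hypothesis DDt_pd : posdef (D *m D^T).

Local Notation K := (Kcal A B C D N).
Local Notation M := (Mcal A B C D N).

Lemma sqnorm_le_Kcal x : sqnorm x <= mxform K x x.
Proof.
rewrite mxformD mxform_congruence lerDl.
exact: (psd_invmx (psd_gram _)).2.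
Qed.

Lemma Kcal_posdef : posdef K.
Proof.
split=> [|x x_neq0]; last by rewrite (lt_le_trans _ (sqnorm_le_Kcal x)) ?sqnorm_gt0.
by rewrite /symmx linearD /= trmx1 (symmx_congruence _ (psd_invmx (psd_gram _)).1).
Qed.

Lemma Mcal_psd : psd M.
Proof.
rewrite /Mcal -{1}[Lcal A B N]trmxK.
exact: psd_congruence (psd_invmx (posdef_psd Kcal_posdef)).
Qed.

Lemma OmegaN_posdef : observable A C -> (n <= N)%N -> posdef (OmegaN A B C D N).
Proof.
move=> AC_obs le_nN; rewrite /OmegaN /Gcal.
apply: posdef_congruence _ (Ocal_inj AC_obs le_nN).
apply: posdef_invmx; split=> [|x x_neq0].
  by rewrite /symmx linearD /= (psd_gram _).1 (psd_gram _).1.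
rewrite -/(mxform _ x x) mxformD !mxform_gram.
have : (Dcal D N)^T *m x != 0 by apply: contra x_neq0 => /eqP/(Dcal_tr_inj DDt_pd)->.
by rewrite -sqnorm_gt0 => Dx_gt0; rewrite ltr_pwDl ?sqnorm_ge0.
Qed.

Lemma OmegaPhi_posdef_small : observable A C -> (n <= N)%N ->
  exists2 e, 0 < e & forall Phi : 'M[R]_(N * n), psd Phi ->
    (forall x, mxform Phi x x <= e * sqnorm x) -> posdef (OmegaPhi A B C D Phi).
Proof.
move=> AC_obs le_nN; have Om_pd := OmegaN_posdef AC_obs le_nN.
have [lam lam_gt0 Om_ge] := posdef_coercive Om_pd.
have [cM cM_ge0 M_le] := sqnorm_mulmx_le M.
have [cJ cJ_ge0 J_le] := sqnorm_mulmx_le (Jcal A B C D N).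
pose t := cJ / lam; have t_ge0 : 0 <= t by rewrite divr_ge0 // ltW.
have cJ_eq : cJ = t * lam by rewrite divfK ?gt_eqF.
(* [e c < 1] for [e := (1 + c)^-1] gives both [64 e^2 cM < 1] and [2 e cJ < lam]. *)
pose c := 8 * (1 + cM) + 2 * t.
have c_ge0 : 0 <= c by rewrite /c; nra.
exists (1 + c)^-1 => [|Phi Phi_psd Phi_le]; first by rewrite invr_gt0; lra.
have := mulVD1r_lt1 c_ge0; have : 0 < (1 + c)^-1 by rewrite invr_gt0; lra.
set e := (1 + c)^-1 in Phi_le * => e_gt0 ec_lt1.
have e_small : e ^+ 2 * cM <= 1 / 64 by rewrite /c in ec_lt1; nra.
have T_sym := resolvent_sym Phi_psd Phi_le Mcal_psd M_le (ltW e_gt0) e_small.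
have T_le := resolvent_le Phi_psd Phi_le Mcal_psd M_le (ltW e_gt0) e_small.
have Sinv_sym : symmx (Sinv A B C D Phi) by rewrite /symmx /Sinv linearN /= T_sym.
split; first by rewrite /symmx /OmegaPhi linearD /= Om_pd.1 (symmx_congruence _ Sinv_sym).
have et_lt1 : 2 * e * t < 1 by rewrite /c in ec_lt1; nra.
move=> x x_neq0; rewrite -/(mxform _ x x) mxformD mxform_congruence mxformN.
have x_gt0 : 0 < lam * sqnorm x by rewrite mulr_gt0 ?sqnorm_gt0.
have Jx_le : 2 * e * sqnorm (Jcal A B C D N *m x) <= 2 * e * t * (lam * sqnorm x).
  by have := J_le x; rewrite cJ_eq; nra.
have := Om_ge x; have := T_le (Jcal A B C D N *m x); nra.
Qed.

Lemma Wcal_posdef_small : reachable A B -> (n <= N)%N ->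
  exists2 e, 0 < e & forall Phi : 'M[R]_(N * n), psd Phi ->
    (forall x, mxform Phi x x <= e * sqnorm x) -> posdef (Wcal A B C D Phi).
Proof.
move=> AB_reach le_nN; have [cL cL_ge0 L_le] := sqnorm_mulmx_le (Lcal A B N).
exists (1 + cL)^-1 => [|Phi Phi_psd Phi_le]; first by rewrite invr_gt0; lra.
have := mulVD1r_lt1 cL_ge0; have : 0 < (1 + cL)^-1 by rewrite invr_gt0; lra.
set e := (1 + cL)^-1 in Phi_le * => e_gt0 ecL_lt1.
have KL_pd : posdef (K - (Lcal A B N)^T *m Phi *m Lcal A B N).
  split=> [|x x_neq0].
    by rewrite /symmx linearB /= Kcal_posdef.1 (symmx_congruence _ Phi_psd.1).
  rewrite -/(mxform _ x x) mxformB mxform_congruence.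
  have := sqnorm_le_Kcal x; have := Phi_le (Lcal A B N *m x); have := L_le x.
  have := sqnorm_gt0 x; rewrite x_neq0; nra.
rewrite /Wcal /Qcal -[Rcal A B N in X in X *m _ *m _]trmxK.
exact: posdef_congruence (posdef_invmx KL_pd) (Rcal_tr_inj AB_reach le_nN).
Qed.

Lemma lt_phitilde phi : 0 < phi -> phi * sigma1 M < 1 -> (phi%:E < phitilde A B C D N)%E.
Proof.
rewrite /phitilde => phi_gt0 phis_lt1; case: eqP => [_|/eqP s_neq0]; first exact: ltey.
have s_gt0 : 0 < sigma1 M by rewrite lt_def s_neq0 sigma1_ge0.
by rewrite lte_fin -(ltr_pM2r s_gt0) mulVf ?gt_eqF.
Qed.

End System.

Theorem proposition1 (R : realType) (n m p : nat)
  (A : 'M[R]_n) (B : 'M[R]_(n, m)) (C : 'M[R]_(p, n)) (D : 'M[R]_(p, m))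
  (N : nat) :
  (0 < n)%N -> (0 < m)%N -> (0 < p)%N ->
  posdef (D *m D^T) -> B *m D^T = 0 ->
  reachable A B -> observable A C -> (n <= N)%N ->
  exists phiN : R,
    0 < phiN /\ (phiN%:E < phitilde A B C D N)%E /\
    forall Phi : 'M[R]_(N * n),
      symmx Phi -> loewner_le 0 Phi -> loewner_le Phi (phiN%:M) ->
      posdef (OmegaPhi A B C D Phi) /\ posdef (Wcal A B C D Phi).
Proof.
move=> _ _ _ DDt_pd _ AB_reach AC_obs le_nN.
have [e1 e1_gt0 Omega_pd] := OmegaPhi_posdef_small B DDt_pd AC_obs le_nN.
have [e2 e2_gt0 W_pd] := Wcal_posdef_small C D AB_reach le_nN.
have s_ge0 := sigma1_ge0 (Mcal A B C D N); set s := sigma1 _ in s_ge0 *.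
pose phiN := Num.min (Num.min e1 e2) (1 + s)^-1.
have phiN_gt0 : 0 < phiN by rewrite !lt_min e1_gt0 e2_gt0 invr_gt0; lra.
exists phiN; split=> //; split.
  apply: lt_phitilde => //; apply: le_lt_trans (mulVD1r_lt1 s_ge0).
  by rewrite ler_wpM2r // ge_min lexx orbT.
move=> Phi _; rewrite /loewner_le subr0 => Phi_psd Phi_le.
have Phi_le_e e x : phiN <= e -> mxform Phi x x <= e * sqnorm x.
  move=> phiN_le; apply: le_trans (loewner_le_scalar x Phi_le) _.
  by rewrite ler_wpM2r ?sqnorm_ge0.
split; [apply: Omega_pd | apply: W_pd] => // x; apply: Phi_le_e.
  by rewrite !ge_min lexx.
by rewrite !ge_min lexx orbT.
Qed.
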